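(* Let $J=\{1,2\}\times\{1,2\}$, let $(a_{i,j})$ be the square array of strongly matricially free Toeplitz operators $a_{i,j}=\ell_{i,j}+f_{i,j}(\ell_{i,j}^* )$ on $\mathcal{N}$, let $R_{i,j}$ be the R-transform of the distribution of $a_{i,j}$ in the state $\varphi_{i,j}$, let $A=\sum_{i,j}a_{i,j}$, and let $\mathcal{R}_A(z)=\sum_{i,j}R_{i,j}(z)1_{i,j}$ be the corresponding matricial R-transform and $C_A(z)=\frac1z+\mathcal{R}_A(z)$. Then for $|z|$ sufficiently small and positive, $C_A(z)$ has the multiplicative inverse $$B_A(z)=\frac{z}{1+z(R_{1,1}(z)+R_{2,2}(z))}\,p+\frac{z}{1+z(R_{1,1}(z)+R_{2,1}(z))}\,p_{1,1}+\frac{z}{1+z(R_{2,2}(z)+R_{1,2}(z))}\,p_{2,2}+\frac{z}{1+z(R_{1,2}(z)+R_{2,1}(z))}\,(p_{1,2}+p_{2,1}),$$ where the sums $R_{1,1}+R_{2,2}$, $R_{1,1}+R_{2,1}$, $R_{2,2}+R_{1,2}$, $R_{1,2}+R_{2,1}$ are the R-transforms of the free convolutions $\mu_{1,1}\boxplus\mu_{2,2}$, $\mu_{1,1}\boxplus\mu_{2,1}$, $\mu_{2,2}\boxplus\mu_{1,2}$, $\mu_{1,2}\boxplus\mu_{2,1}$ of the distributions $\mu_{i,j}$ of $a_{i,j}$ in $\varphi_{i,j}$.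
   Context: Fock space (square array). Let $(\alpha_{i,j})_{i,j\in\{1,2\}}$ be positive reals, $\{e_{i,j}\}$ orthonormal vectors, $\mathcal{F}$ the full Fock space over $\bigoplus_{i,j}\mathbb{C}e_{i,j}$ with vacuum $\Omega$. The strongly matricially free Fock space $\mathcal{N}\subseteq\mathcal{F}$ is the closed span of $\Omega$ and all simple tensors $e_{i_1,i_2}^{\otimes n_1}\otimes e_{i_2,i_3}^{\otimes n_2}\otimes\dots\otimes e_{i_{m-1},i_m}^{\otimes n_{m-1}}\otimes e_{i_m,i_m}^{\otimes n_m}$ ($m\ge1$, $n_k\ge1$, $i_1\neq\dots\neq i_m$). With $P$ the projection onto $\mathcal{N}$ and $\ell(e)w=e\otimes w$, set $\ell_{i,j}=\alpha_{i,j}P\ell(e_{i,j})|_{\mathcal{N}}$. Let $\mathcal{N}_{i,j}$ be the closed span of those simple tensors whose first factor is $e_{i,j}$, $p$ the projection onto $\mathbb{C}\Omega$ and $p_{i,j}$ the projection onto $\mathcal{N}_{i,j}$. Internal units: $1_{j,j}$ is the projection onto $\mathbb{C}\Omega\oplus\mathcal{N}_{j,j}$, and for $i\ne j$, $1_{i,j}$ is the projection onto $\mathcal{N}\ominus(\mathbb{C}\Omega\oplus\mathcal{N}_{i,i})$. States $\varphi_{i,j}(x)=\langle x\Omega_{i,j},\Omega_{i,j}\rangle$, $\Omega_{j,j}=\Omega$, $\Omega_{i,j}=e_{j,j}$ ($i\ne j$). Toeplitz operators: $a_{i,j}=\ell_{i,j}+f_{i,j}(\ell_{i,j}^* )$ for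 polynomials $f_{i,j}(w)=\sum_{n=0}^dc_{i,j}(n)w^n$, with $f_{i,j}(\ell_{i,j}^* ):=c_{i,j}(0)1_{i,j}+\sum_{n\ge1}c_{i,j}(n)(\ell_{i,j}^* )^n$. The R-transform of a distribution with moments $m_n$ is the power series $R$ analytic near $0$ with $G(1/z+R(z))=z$ for small $|z|>0$, $G(w)=\sum_n m_nw^{-n-1}$. *)

From HB Require Import structures.
From mathcomp Require Import all_boot all_order all_algebra.
From mathcomp Require Import complex.
From mathcomp Require Import all_classical all_reals all_analysis.
Set Implicit Arguments. Unset Strict Implicit. Unset Printing Implicit Defensive.
Import Order.TTheory GRing.Theory Num.Theory.
Import numFieldTopology.Exports numFieldNormedType.Exports.
Local Open Scope classical_set_scope.
Local Open Scope ring_scope.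

(* Topology/norm on the complex numbers R[i]: the one of R[i] as a normed
   field over itself (norm = complex modulus). *)
HB.instance Definition _ (R : rcfType) := NormedModule.copy R[i] R[i]^o.

Definition J := ('I_2 * 'I_2)%type.
Definition i1 : 'I_2 := ord0.
Definition i2 : 'I_2 := ord_max.

(* Simple tensors e_{x_1} (x) ... (x) e_{x_n} of the full Fock space are
   indexed by words (seq J); the empty word is the vacuum Omega.  The family
   of all words is an orthonormal basis of F. *)
Definition word := seq J.

(* Allowed transitions between consecutive letters of a basis tensor of N *)
Definition step (x y : J) : bool := (x == y) || ((x.1 != x.2) && (y.1 == x.2)).

(* adm w <=> w is Omega or a tensor
   e_{i1,i2}^{n1} (x) e_{i2,i3}^{n2} (x) ... (x) e_{im,im}^{nm}
   with n_k >= 1 and i_1 <> i_2 <> ... <> i_m, i.e. a basis vector of N. *)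
Definition adm (w : word) : bool :=
  if w is x :: s then path step x s && ((last x s).1 == (last x s).2) else true.

Section Fock.
Variable R : realType.
Local Notation C := R[i].

(* Vectors are given by their coefficients in the orthonormal basis of
   words; operators act on coefficient functions.  The vectors of N are those
   supported on admissible words. *)
Definition vec := word -> C.
Definition op := vec -> vec.

Definition inN (v : vec) : Prop := forall w, ~~ adm w -> v w = 0.

Definition basisv (u : word) : vec := fun w => if w == u then 1 else 0.

Definition proj (P : pred word) : op := fun v w => if P w then v w else 0.

Definition first_is (x : J) (w : word) : bool :=
  if w is y :: _ then y == x else false.

Definition pvac : op := proj (fun w => w == [::]).
Definition pJ (x : J) : op := proj (fun w => adm w && first_is x w).

Definition unitJ (x : J) : op :=
  if x.1 == x.2 then proj (fun w => adm w && ((w == [::]) || first_is x w))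
  else proj (fun w => adm w && (w != [::]) && ~~ first_is (x.1, x.1) w).

(* l_{i,j} = alpha_{i,j} P l(e_{i,j}) |_N  and its adjoint on N *)
Definition ellJ (alpha : J -> R) (x : J) : op := fun v w =>
  if w is y :: w' then (if (y == x) && adm w then (alpha x)%:C%C * v w' else 0)
  else 0.
Definition ellJadj (alpha : J -> R) (x : J) : op := fun v w =>
  if adm w then (alpha x)%:C%C * v (x :: w) else 0.

(* Toeplitz operator a_{i,j} = l_{i,j} + f_{i,j}(l_{i,j}^* ) with
   f(l^* ) = c(0) 1_{i,j} + sum_{n>=1} c(n) (l^* )^n *)
Definition toeplitz (alpha : J -> R) (f : J -> {poly C}) (x : J) : op :=
  fun v w => ellJ alpha x v w + (f x)`_0 * unitJ x v w
             + \sum_(1 <= n < size (f x)) (f x)`_n * iter n (ellJadj alpha x) v w.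

Definition OmegaJ (x : J) : word := if x.1 == x.2 then [::] else [:: (x.2, x.2)].

(* moments phi_{i,j}(a_{i,j}^n) = < a_{i,j}^n Omega_{i,j}, Omega_{i,j} > *)
Definition moments (alpha : J -> R) (f : J -> {poly C}) (x : J) (n : nat) : C :=
  iter n (toeplitz alpha f x) (basisv (OmegaJ x)) (OmegaJ x).

(* Rf is the R-transform of the distribution with moments m:
   Rf is given near 0 by a convergent power series, and
   G(1/z + Rf z) = z for small |z| > 0, where G(w) = sum_n m_n w^{-n-1}. *)
Definition is_Rtransform (m : nat -> C) (Rf : C -> C) : Prop :=
  (exists (r : nat -> C) (rho : C), 0 < rho /\
     forall z : C, `|z| < rho ->
       series (fun k => r k * z ^+ k) @ \oo --> Rf z) /\
  (exists delta : C, 0 < delta /\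
     forall z : C, 0 < `|z| < delta ->
       series (fun n => m n * (z^-1 + Rf z) ^- n.+1) @ \oo --> z).

Definition CA (Rt : J -> C -> C) (z : C) : op :=
  fun v w => z^-1 * v w + \sum_(x : J) Rt x z * unitJ x v w.

Definition BA (Rt : J -> C -> C) (z : C) : op :=
  fun v w =>
    z / (1 + z * (Rt (i1, i1) z + Rt (i2, i2) z)) * pvac v w
  + z / (1 + z * (Rt (i1, i1) z + Rt (i2, i1) z)) * pJ (i1, i1) v w
  + z / (1 + z * (Rt (i2, i2) z + Rt (i1, i2) z)) * pJ (i2, i2) v w
  + z / (1 + z * (Rt (i1, i2) z + Rt (i2, i1) z))
      * (pJ (i1, i2) v w + pJ (i2, i1) v w).

End Fock.

From Pilot Require Import Defs.
From HB Require Import structures.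
From mathcomp Require Import all_boot all_order all_algebra.
From mathcomp Require Import complex.
From mathcomp Require Import all_classical all_reals all_analysis.
From mathcomp Require Import ring.
Import Order.TTheory GRing.Theory Num.Theory.
Import numFieldTopology.Exports numFieldNormedType.Exports.
Local Open Scope classical_set_scope.
Local Open Scope ring_scope.

(* On N both C_A(z) and B_A(z) are diagonal in the basis of admissible words:
   a word w in the range of p, p_{1,1}, p_{2,2} or p_{1,2} + p_{2,1} is
   multiplied by 1/z + S(w) and by z / (1 + z S(w)) respectively, where S(w)
   is the sum of the two R_{i,j}(z) whose internal units 1_{i,j} contain w.
   These scalars are mutually inverse as soon as z S(w) <> -1.  Each R_{i,j}
   is the sum of a power series with positive radius, hence bounded near 0,
   so |z R_{i,j}(z)| < 1/2 and |z S(w)| < 1 for small z. *)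

Section PowerSeries.
Context {K : numFieldType}.

Lemma sum_half_powers n : \sum_(k < n) (2^-1 : K) ^+ k = 2 - 2 * 2^-1 ^+ n.
Proof.
elim: n => [|n IHn]; first by rewrite big_ord0 expr0 mulr1 subrr.
have two_neq0 : (2 : K) != 0 by rewrite pnatr_eq0.
by rewrite big_ord_recr /= IHn exprS; field.
Qed.

Lemma power_series_bounded_near0 {r : nat -> K} {Rf : K -> K} {rho : K} :
  0 < rho -> (forall z, `|z| < rho -> series (fun k => r k * z ^+ k) @ \oo --> Rf z) ->
  exists2 B, 0 < B & \forall z \near (0 : K), `|Rf z| < B.
Proof.
move=> rho0 hRf.
have half_lt (x : K) : 0 < x -> x / 2 < x.
  by move=> x0; rewrite ltr_pdivrMr // mulr_natr mulr2n ltrDl.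
set t := rho / 2.
have t0 : 0 < t by rewrite divr_gt0.
have : cvgn (fun k => r k * t ^+ k).
  apply/cvg_ex; exists 0; apply: cvg_series_cvg_0.
  by apply/cvg_ex; exists (Rf t); apply: hRf; rewrite gtr0_norm // half_lt.
move=> /cvg_seq_bounded /ex_strict_bound_gt0 [M M0 hM].
exists (1 + 2 * M); first by rewrite addr_gt0 // mulr_gt0.
have : \forall z \near (0 : K), `|z| < t / 2.
  by apply/nbhs_norm0P; exists (t / 2) => //=; rewrite divr_gt0.
apply: filterS => z z_t.
have term_le k : `|r k * z ^+ k| <= M * 2^-1 ^+ k.
  rewrite normrM normrX; apply: (@le_trans _ _ (`|r k| * (t / 2) ^+ k)).
    by rewrite ler_wpM2l // lerXn2r ?nnegrE ?(ltW z_t) // divr_ge0 // ltW.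
  rewrite exprMn mulrA ler_pM2r ?exprn_gt0 ?invr_gt0 //.
  by have := hM k I; rewrite /= normrM normrX (gtr0_norm t0) => /ltW.
have partial_le n : `|series (fun k => r k * z ^+ k) n| <= 2 * M.
  rewrite /series /= big_mkord; apply: le_trans (ler_norm_sum _ _ _) _.
  apply: (@le_trans _ _ (\sum_(k < n) M * 2^-1 ^+ k)).
    by apply: ler_sum => k _; apply: term_le.
  rewrite -mulr_sumr sum_half_powers mulrC ler_pM2r // gerBl.
  by rewrite mulr_ge0 // exprn_ge0 // invr_ge0.
have z_rho : `|z| < rho by apply: lt_trans z_t (lt_trans (half_lt _ t0) (half_lt _ rho0)).
have [n close_n] := filter_ex ((cvgrPdist_lt _ _).1 (hRf z z_rho) 1 ltr01).
rewrite -(subrK (series (fun k => r k * z ^+ k) n) (Rf z)).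
exact: le_lt_trans (ler_normD _ _) (ltr_leD close_n (partial_le n)).
Qed.

Lemma bounded_near0_mulr_small (g : K -> K) (B e : K) : 0 < B -> 0 < e ->
  (\forall z \near (0 : K), `|g z| < B) -> \forall z \near (0 : K), `|z * g z| < e.
Proof.
move=> B0 e0 gB.
have : \forall z \near (0 : K), `|z| < e / B.
  by apply/nbhs_norm0P; exists (e / B) => //=; rewrite divr_gt0.
apply: filterS2 gB => z gz zs.
by rewrite normrM -(divfK (lt0r_neq0 B0) e) ltr_pM.
Qed.
End PowerSeries.

Lemma add1r_neq0 (K : numDomainType) (a : K) : `|a| < 1 -> 1 + a != 0.
Proof.
move=> a_lt1; apply/eqP => a_eq; move: a_lt1.
by rewrite (_ : a = -1) ?normrN ?normr1 ?ltxx //; apply/eqP; rewrite -addr_eq0 addrC a_eq.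
Qed.

Lemma ord2_cases (a : 'I_2) : a = i1 \/ a = i2.
Proof. by case: a => -[|[|//]] a_lt2; [left | right]; apply: val_inj. Qed.

Section FockDiagonal.
Variables (R : realType) (Rt : J -> R[i] -> R[i]).
Local Notation K := R[i].

Lemma sum_J (F : J -> K) :
  \sum_(x : J) F x = F (i1, i1) + F (i1, i2) + F (i2, i1) + F (i2, i2).
Proof.
transitivity (\sum_(p : 'I_2 * 'I_2) F (p.1, p.2)); first by apply: eq_bigr => -[].
rewrite -(pair_bigA _ (fun a b => F (a, b))) /= !big_ord_recl !big_ord0 /=.
by rewrite !addr0 !addrA; congr (_ + _ + _ + _); congr F; congr pair; apply: val_inj.
Qed.

(* S(w): the internal units containing an admissible word are read off its
   first letter; the vacuum lies in 1_{1,1} and 1_{2,2}. *)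
Definition word_Rsum (z : K) (w : word) : K :=
  match w with
  | [::] => Rt (i1, i1) z + Rt (i2, i2) z
  | y :: _ => if y == (i1, i1) then Rt (i1, i1) z + Rt (i2, i1) z
              else if y == (i2, i2) then Rt (i2, i2) z + Rt (i1, i2) z
              else Rt (i1, i2) z + Rt (i2, i1) z
  end.

Lemma CA_adm z (v : vec R) w : adm w -> CA Rt z v w = (z^-1 + word_Rsum z w) * v w.
Proof.
move=> aw; rewrite /CA sum_J /unitJ /Defs.proj /= aw /=.
case: w aw => [|[a b] s] aw /=; first ring.
by case: (ord2_cases a) => ->; case: (ord2_cases b) => -> /=;
  rewrite ?xpair_eqE ?eqxx /=; ring.
Qed.

Lemma CA_nadm z (v : vec R) w : ~~ adm w -> CA Rt z v w = z^-1 * v w.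
Proof.
move=> naw; rewrite /CA /unitJ /Defs.proj big1 ?addr0 // => x _.
by case: ifP; rewrite (negbTE naw) mulr0.
Qed.

Lemma BA_adm z (v : vec R) w : adm w -> BA Rt z v w = z / (1 + z * word_Rsum z w) * v w.
Proof.
move=> aw; rewrite /BA /pvac /pJ /Defs.proj /= aw /=.
case: w aw => [|[a b] s] aw /=; first ring.
by case: (ord2_cases a) => ->; case: (ord2_cases b) => -> /=;
  rewrite ?xpair_eqE ?eqxx /=; ring.
Qed.

Lemma BA_nadm z (v : vec R) w : ~~ adm w -> BA Rt z v w = 0.
Proof.
move=> naw; rewrite /BA /pvac /pJ /Defs.proj /= (negbTE naw) /=.
by case: w naw => [|y s] naw //=; ring.
Qed.

Lemma BA_CA_inverse z (v : vec R) : z != 0 ->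
  (forall w, 1 + z * word_Rsum z w != 0) -> inN v ->
  BA Rt z (CA Rt z v) = v /\ CA Rt z (BA Rt z v) = v.
Proof.
move=> z_neq0 nz_denom vN.
have scalar_inv w : z / (1 + z * word_Rsum z w) * (z^-1 + word_Rsum z w) = 1.
  by field; rewrite z_neq0 nz_denom.
split; apply: funext => w; case: (boolP (adm w)) => aw.
- by rewrite BA_adm // CA_adm // mulrA scalar_inv mul1r.
- by rewrite BA_nadm // vN.
- by rewrite CA_adm // BA_adm // mulrA [X in X * _]mulrC scalar_inv mul1r.
- by rewrite CA_nadm // BA_nadm // mulr0 vN.
Qed.

Lemma word_Rsum_small z w :
  (forall x, `|z * Rt x z| < 2^-1) -> `|z * word_Rsum z w| < 1.
Proof.
move=> Rt_small.
have pair_small x y : `|z * (Rt x z + Rt y z)| < 1.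
  rewrite mulrDr; apply: le_lt_trans (ler_normD _ _) _.
  by rewrite [X in _ < X](splitr 1) mul1r ltrD.
by case: w => [|y s] /=; [|case: ifP => _; [|case: ifP => _]]; apply: pair_small.
Qed.

End FockDiagonal.

Theorem proposition5p2 (R : realType) (alpha : J -> R)
  (halpha : forall x : J, 0 < alpha x)
  (f : J -> {poly R[i]}) (Rt : J -> R[i] -> R[i])
  (hRt : forall x : J, is_Rtransform (moments alpha f x) (Rt x)) :
  exists delta : R[i], 0 < delta /\
    forall z : R[i], 0 < `|z| < delta ->
      forall v : vec R, inN v ->
        BA Rt z (CA Rt z v) = v /\ CA Rt z (BA Rt z v) = v.
Proof.
have : \forall z \near (0 : R[i]), forall x, `|z * Rt x z| < 2^-1.
  apply: filter_forall (nbhs_filter _) _ => x.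
  have [[r [rho [rho0 hr]]] _] := hRt x.
  have [B B0 hB] := power_series_bounded_near0 rho0 hr.
  exact: bounded_near0_mulr_small B0 _ hB.
move=> /nbhs_norm0P [d /= d0 Rt_small].
exists d; split => // z /andP [z0 zd] v vN.
apply: BA_CA_inverse => //; first by rewrite -normr_gt0.
by move=> w; apply/add1r_neq0/word_Rsum_small => x; apply: Rt_small.
Qed.
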